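(* Let $n,m$ be positive integers, $N=\{1,\dots,n\}$, and let $g$ be a kernel on $N$. The following are equivalent: (i) $g$ is a discrete $m$-interpolation kernel; (ii) for all $I_0\subseteq I_1\subseteq N$ and all $z:I_0\to\mathcal M_m(\mathbb C)$, $\|T_{g,z}(I_1)\|\le\|T_{g,z}\|$; (iii) for all $I_0\subseteq I_1\subseteq N$ such that $I_1\setminus I_0$ consists of a single point, and all $z:I_0\to\mathcal M_m(\mathbb C)$, $\|T_{g,z}(I_1)\|\le\|T_{g,z}\|$.
   Context: A function $g:N\times N\to\mathbb C$ is a kernel on $N$ if the matrix $(g(i,j))_{i,j\in N}$ is positive semidefinite and, with $\mathrm{spt}(g)=\{i:g(i,i)\ne0\}$, the matrix $(g(i,j))_{i,j\in\mathrm{spt}(g)}$ is positive definite. Let $g_i(j)=g(i,j)$ and let $H_g$ be the (finite-dimensional) Hilbert space spanned by $\{g_i:i\in\mathrm{spt}(g)\}$ with $\langle g_i,g_j\rangle=g(i,j)$... more precisely $\langle\sum c_ig_i,\sum d_jg_j\rangle=\sum_{i,j}g(i,j)c_i\bar d_j$. Let $H_{g,m}=\mathbb C^m\otimes H_g$, writing $ag_i=a\otimes g_i$. For $I\subseteq N$ let $H_{g,m}(I)=\mathrm{span}\{ag_i:a\in\mathbb C^m,\ i\in I\cap\mathrm{spt}(g)\}$, and for $z:I\to\mathcal M_m(\mathbb C)$ let $T_{g,z}\in\mathcal L(H_{g,m}(I))$ be defined by $T_{g,z}(ag_i)=(z(i)^*a)g_i$ for $a\in\mathbb C^m$, $i\in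 I\cap\mathrm{spt}(g)$. For $I_0\subseteq I_1\subseteq N$ let $H_{g,m}(I_0,I_1)=H_{g,m}(I_1)\ominus H_{g,m}(I_1\setminus I_0)$, and for $z:I_0\to\mathcal M_m(\mathbb C)$ let $T_{g,z}(I_1)=PT_{g,\tilde z}|_{H_{g,m}(I_0,I_1)}$, where $P$ is the orthogonal projection of $H_{g,m}(I_1)$ onto $H_{g,m}(I_0,I_1)$ and $\tilde z:I_1\to\mathcal M_m(\mathbb C)$ is any extension of $z$ (the result does not depend on the extension). $g$ is a discrete $m$-interpolation kernel if for every $I\subseteq N$ and every $z:I\to\mathcal M_m(\mathbb C)$, $\|T_{g,z}\|=\inf\{\|T_{g,\tilde z}\|:\tilde z:N\to\mathcal M_m(\mathbb C),\ \tilde z|_I=z\}$. *)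

From HB Require Import structures.
From mathcomp Require Import all_boot all_order all_algebra.
Set Implicit Arguments. Unset Strict Implicit. Unset Printing Implicit Defensive.
Import Order.TTheory GRing.Theory Num.Theory.
Local Open Scope ring_scope.

Section KernelDefs.
Variables (C : numClosedFieldType) (n m : nat).

Definition qform (g : 'M[C]_n) (v : 'I_n -> C) : C :=
  \sum_(i < n) \sum_(j < n) g i j * v i * (v j)^*.

Definition spt (g : 'M[C]_n) : {set 'I_n} := [set i | g i i != 0].

Definition is_kernel (g : 'M[C]_n) : Prop :=
  (forall v : 'I_n -> C, 0 <= qform g v) /\
  (forall v : 'I_n -> C, (forall i, i \notin spt g -> v i = 0) ->
     (exists i, v i != 0) -> 0 < qform g v).

(* An element sum_i a_i g_i of H_{g,m} (i in spt g) is represented by the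
   matrix A : 'M_(n,m) whose i-th row is a_i (rows outside the relevant index
   set are zero). *)
Definition ip (g : 'M[C]_n) (A B : 'M[C]_(n, m)) : C :=
  \sum_(i < n) \sum_(j < n) g i j * \sum_(k < m) A i k * (B j k)^*.

Definition inH (g : 'M[C]_n) (I : {set 'I_n}) (A : 'M[C]_(n, m)) : Prop :=
  forall i k, i \notin (I :&: spt g) -> A i k = 0.

Definition inH2 (g : 'M[C]_n) (I0 I1 : {set 'I_n}) (A : 'M[C]_(n, m)) : Prop :=
  inH g I1 A /\ (forall B, inH g (I1 :\: I0) B -> ip g A B = 0).

Definition is_proj (g : 'M[C]_n) (S : 'M[C]_(n, m) -> Prop)
  (y p : 'M[C]_(n, m)) : Prop :=
  S p /\ (forall B, S B -> ip g (y - p) B = 0).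

(* T_{g,z} : a g_i |-> (z(i)^* a) g_i *)
Definition Tmap (z : 'I_n -> 'M[C]_m) (A : 'M[C]_(n, m)) : 'M[C]_(n, m) :=
  \matrix_(i < n, k < m) \sum_(l < m) (z i l k)^* * A i l.

(* "the operator (given as a relation R x y : y is the image of x) on the
   subspace S has norm <= c" : ||y||^2 <= c^2 ||x||^2 *)
Definition opnorm_le (g : 'M[C]_n) (S : 'M[C]_(n, m) -> Prop)
  (R : 'M[C]_(n, m) -> 'M[C]_(n, m) -> Prop) (c : C) : Prop :=
  forall x y, S x -> R x y -> ip g y y <= c ^+ 2 * ip g x x.

(* ||T1|| <= ||T2||, expressed through the norm bounds *)
Definition opnorm_cmp (g : 'M[C]_n)
  (S1 : 'M[C]_(n, m) -> Prop) (R1 : 'M[C]_(n, m) -> 'M[C]_(n, m) -> Prop)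
  (S2 : 'M[C]_(n, m) -> Prop) (R2 : 'M[C]_(n, m) -> 'M[C]_(n, m) -> Prop) : Prop :=
  forall c, 0 <= c -> opnorm_le g S2 R2 c -> opnorm_le g S1 R1 c.

Definition Trel (z : 'I_n -> 'M[C]_m) (x y : 'M[C]_(n, m)) : Prop := y = Tmap z x.

(* T_{g,z}(I1) on H_{g,m}(I0,I1) : P T_{g,z~}, where the total function z
   serves as the extension z~ of z|_{I0} *)
Definition Trel2 (g : 'M[C]_n) (I0 I1 : {set 'I_n}) (z : 'I_n -> 'M[C]_m)
  (x y : 'M[C]_(n, m)) : Prop := is_proj g (inH2 g I0 I1) (Tmap z x) y.

(* g is a discrete m-interpolation kernel:
   ||T_{g,z}|| = inf { ||T_{g,z~}|| : z~ : N -> M_m, z~|_I = z } *)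
Definition interp_kernel (g : 'M[C]_n) : Prop :=
  forall (I : {set 'I_n}) (z : 'I_n -> 'M[C]_m),
    (* ||T_{g,z}|| is a lower bound *)
    (forall z' : 'I_n -> 'M[C]_m, (forall i, i \in I -> z' i = z i) ->
       opnorm_cmp g (inH g I) (Trel z) (inH g setT) (Trel z'))
    /\
    (* and the greatest one: inf <= ||T_{g,z}|| *)
    (forall c, 0 <= c -> opnorm_le g (inH g I) (Trel z) c ->
     forall eps, 0 < eps ->
       exists z' : 'I_n -> 'M[C]_m, (forall i, i \in I -> z' i = z i) /\
         opnorm_le g (inH g setT) (Trel z') (c + eps)).

End KernelDefs.

From HB Require Import structures.
From mathcomp Require Import all_boot all_order all_algebra.
From mathcomp Require Import ring.
Import Order.TTheory GRing.Theory Num.Theory.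
Local Open Scope ring_scope.
Set Implicit Arguments. Unset Strict Implicit. Unset Printing Implicit Defensive.

(* (i) => (ii): for x in H(I0, I1), the images of x under T_{g,z} and under
   any extension T_{g,z~} differ by an element of H(I1 \ I0), so they have the
   same projection onto H(I0, I1); hence ||T_{g,z}(I1)|| <= ||T_{g,z~}|| for
   every extension, and (i) makes the right-hand side close to ||T_{g,z}||.
   (iii) => (i) is a Parrott-type one-point extension, iterated over the points
   outside I with bounds c < c_1 < ... < c + eps.  To extend z from J to
   J + p with ||T|| <= c', let Q be the projection onto the orthogonal
   complement of the p-row; then Q T_{g,z'} = Q T_{g,z} for every extension,
   and (iii) makes the form c'^2 <a, b> - <Q T_{g,z} a, Q T_{g,z} b>
   positive semidefinite on H(J + p) and definite on H(J).  The value z'(p)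
   is read off the orthogonal projection onto H(J) for this form. *)

Lemma ler_mul_sqr_eps (R : numFieldType) (a b c : R) : 0 <= b -> 0 <= c ->
  (forall e, 0 < e -> a <= (c + e) ^+ 2 * b) -> a <= c ^+ 2 * b.
Proof.
move=> b0 c0 hab; apply/ler_addgt0Pr => e e0.
pose K := (2%:R * c + 1) * b.
have K0 : 0 <= K by rewrite mulr_ge0 ?addr_ge0 ?mulr_ge0.
have Ke0 : 0 < K + e by rewrite ltr_wpDl.
pose d := e / (K + e).
have d0 : 0 < d by rewrite divr_gt0.
have d1 : d <= 1 by rewrite ler_pdivrMr // mul1r lerDr.
apply: (le_trans (hab d d0)).
have -> : (c + d) ^+ 2 * b = c ^+ 2 * b + d * ((2%:R * c + d) * b) by ring.
rewrite lerD2l (@le_trans _ _ (d * K)) //.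
  by apply/ler_wpM2l; [exact: ltW | apply/ler_wpM2r; rewrite // lerD2l].
by rewrite /d mulrAC ler_pdivrMr // ler_pM2l // lerDl ltW.
Qed.

Lemma linear_inj_rinverse (K : fieldType) (V : vectType K) (f : V -> V) :
  linear f -> injective f -> exists h : 'End(V), forall y, f (h y) = y.
Proof.
move=> lin_f inj_f.
pose F : {linear V -> V} := HB.pack f (GRing.isLinear.Build K V V _ f lin_f).
have kerF : lker (linfun F) == 0%VS by apply/lker0P => u v; rewrite !lfunE; apply: inj_f.
by exists (linfun F)^-1%VF => y; have := lker0_lfunVK kerF y; rewrite lfunE.
Qed.

Lemma scalar_sum (R : comNzRingType) (V : lmodType R) (f : V -> R) :
  scalar f -> forall (I : finType) (a : I -> R) (v : I -> V),
  f (\sum_i a i *: v i) = \sum_i a i * f (v i).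
Proof.
move=> lin_f I a v; pose F : {scalar V} := HB.pack f (GRing.isLinear.Build R V R _ f lin_f).
change (F (\sum_i a i *: v i) = \sum_i a i * F (v i)).
by rewrite linear_sum; apply: eq_bigr => i _; rewrite linearZ.
Qed.

Section SemiInnerProduct.
Variables (C : numClosedFieldType) (n m : nat) (g : 'M[C]_n).
Hypothesis hg : is_kernel g.

Definition sform (u v : 'I_n -> C) := \sum_(i < n) \sum_(j < n) g i j * u i * (v j)^*.

Lemma sform_ge0 u : 0 <= sform u u.
Proof. exact: hg.1. Qed.

Lemma sform_polar (u v : 'I_n -> C) (a : C) :
  sform (fun k => u k + a * v k) (fun k => u k + a * v k) =
  sform u u + a^* * sform u v + a * sform v u + a * a^* * sform v v.
Proof.
rewrite /sform !mulr_sumr -!big_split; apply: eq_bigr => i _.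
rewrite !mulr_sumr -!big_split; apply: eq_bigr => j _ /=.
by rewrite !rmorphD !rmorphM /=; ring.
Qed.

(* Polarization with [a = 1] and [a = 'i] shows that [sform u v + sform v u] and
   ['i * (sform v u - sform u v)] are real, since both are differences of
   nonnegative values of the quadratic form. *)
Lemma sform_herm u v : sform v u = (sform u v)^*.
Proof.
have real_diff a : (sform (fun k => u k + a * v k) (fun k => u k + a * v k)
    - sform u u - sform v v)^* = sform (fun k => u k + a * v k) (fun k => u k + a * v k)
    - sform u u - sform v v.
  by rewrite !rmorphB /= !geC0_conj // sform_ge0.
have := real_diff 1; have := real_diff 'i.
have ii : 'i * - 'i = 1 :> C by rewrite mulrN -expr2 sqrCi opprK.
rewrite !sform_polar conjC1 conjCi ii.
set x := sform u v; set y := sform v u; set su := sform u u; set sv := sform v v.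
have -> : su + - 'i * x + 'i * y + 1 * sv - su - sv = 'i * (y - x) by ring.
have -> : su + 1 * x + 1 * y + 1 * 1 * sv - su - sv = x + y by ring.
rewrite !rmorphM !rmorphD /= conjCi => ei e1.
have hi : 'i != 0 :> C by rewrite neq0Ci.
have ex : x^* - y^* = y - x.
  by apply: (mulfI hi); rewrite -[RHS]ei; ring.
have h2 : (2%:R : C) != 0 by rewrite pnatr_eq0.
apply: (mulfI h2).
have -> : 2%:R * y = (x + y) + (y - x) by ring.
by rewrite -e1 -ex; ring.
Qed.

Implicit Types A B D : 'M[C]_(n, m).

Lemma ipE A B : ip g A B = \sum_(k < m) sform (fun i => A i k) (fun j => B j k).
Proof.
rewrite /ip /sform [RHS]exchange_big; apply: eq_bigr => i _ /=.
rewrite [RHS]exchange_big; apply: eq_bigr => j _ /=; rewrite mulr_sumr.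
by apply: eq_bigr => k _; rewrite mulrA.
Qed.

Lemma ip_herm A B : ip g B A = (ip g A B)^*.
Proof. by rewrite !ipE rmorph_sum; apply: eq_bigr => k _; rewrite sform_herm. Qed.

Lemma ip_ge0 A : 0 <= ip g A A.
Proof. by rewrite ipE sumr_ge0 // => k _; apply: sform_ge0. Qed.

Lemma ipZDl a A B D : ip g (a *: A + B) D = a * ip g A D + ip g B D.
Proof.
rewrite /ip mulr_sumr -big_split; apply: eq_bigr => i _ /=.
rewrite mulr_sumr -big_split; apply: eq_bigr => j _ /=.
rewrite mulrCA -mulrDr; congr (_ * _); rewrite mulr_sumr -big_split.
by apply: eq_bigr => k _; rewrite !mxE mulrDl mulrA.
Qed.

Lemma ipDl A B D : ip g (A + B) D = ip g A D + ip g B D.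
Proof. by rewrite -[A]scale1r ipZDl mul1r scale1r. Qed.

Lemma ipBl A B D : ip g (A - B) D = ip g A D - ip g B D.
Proof. by rewrite -scaleN1r addrC ipZDl addrC mulN1r. Qed.

Lemma ipDr A B D : ip g D (A + B) = ip g D A + ip g D B.
Proof. by rewrite ip_herm ipDl rmorphD /= -!ip_herm. Qed.

Lemma ip_pyth A B : ip g A B = 0 -> ip g (A + B) (A + B) = ip g A A + ip g B B.
Proof.
move=> AB0; rewrite ipDl !ipDr AB0 [ip g B A]ip_herm AB0 conjC0.
by rewrite addr0 add0r.
Qed.

Lemma ip_eq0 A : inH g setT A -> ip g A A = 0 -> A = 0.
Proof.
move=> hA; rewrite ipE => /eqP; rewrite psumr_eq0 => [/allP A0|k _]; last exact: sform_ge0.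
apply/matrixP => i k; rewrite mxE; apply/eqP; apply: contraT => Aik.
have := A0 k (mem_index_enum _); rewrite implyTb => /eqP s0.
have : 0 < sform (fun i => A i k) (fun j => A j k).
  by apply: hg.2; [move=> i' hi'; apply: hA; rewrite setTI | exists i].
by rewrite s0 ltxx.
Qed.

End SemiInnerProduct.

Lemma Tmap_is_linear (C : numClosedFieldType) n m (z : 'I_n -> 'M[C]_m) : linear (Tmap z).
Proof.
move=> a x y; apply/matrixP => i k; rewrite !mxE mulr_sumr -big_split /=.
by apply: eq_bigr => l _; rewrite !mxE; ring.
Qed.

HB.instance Definition _ (C : numClosedFieldType) n m (z : 'I_n -> 'M[C]_m) :=
  GRing.isLinear.Build C 'M[C]_(n, m) 'M[C]_(n, m) _ (Tmap z) (Tmap_is_linear z).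

Section Subspaces.
Variables (C : numClosedFieldType) (n m : nat) (g : 'M[C]_n).
Implicit Types (I J : {set 'I_n}) (A B : 'M[C]_(n, m)) (z : 'I_n -> 'M[C]_m).

Lemma inH_subset I J A : I \subset J -> inH g I A -> inH g J A.
Proof.
move=> IJ hA i k hi; apply: hA; apply: contra hi.
by rewrite !inE => /andP[/(subsetP IJ) -> ->].
Qed.

Lemma inHD I A B : inH g I A -> inH g I B -> inH g I (A + B).
Proof. by move=> hA hB i k hi; rewrite mxE hA // hB // addr0. Qed.

Lemma inHB I A B : inH g I A -> inH g I B -> inH g I (A - B).
Proof. by move=> hA hB i k hi; rewrite !mxE hA // hB // subr0. Qed.

Lemma inH_Tmap I z A : inH g I A -> inH g I (Tmap z A).
Proof. by move=> hA i k hi; rewrite mxE big1 // => l _; rewrite hA ?mulr0. Qed.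

Lemma inH0 A : inH g set0 A -> A = 0.
Proof. by move=> hA; apply/matrixP => i k; rewrite mxE hA // set0I inE. Qed.

Lemma inH_Tmap_diff I0 I1 z z' A : (forall i, i \in I0 -> z' i = z i) ->
  inH g I1 A -> inH g (I1 :\: I0) (Tmap z' A - Tmap z A).
Proof.
move=> zz' hA i k hi; rewrite !mxE -sumrB big1 // => l _.
case: (boolP (i \in I0)) => iI0; first by rewrite zz' // subrr.
rewrite hA ?mulr0 ?subrr //; apply: contra hi.
by rewrite !inE iI0 => /andP[-> ->].
Qed.

End Subspaces.

Section Compression.
Variables (C : numClosedFieldType) (n m : nat) (g : 'M[C]_n).
Hypothesis hg : is_kernel g.

Lemma opnorm_le_mono (S : 'M[C]_(n, m) -> Prop) R (c c' : C) :
  0 <= c -> c <= c' -> opnorm_le g S R c -> opnorm_le g S R c'.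
Proof.
move=> c0 cc' hc x y hx hy; apply: (le_trans (hc x y hx hy)).
by rewrite ler_wpM2r ?(ip_ge0 hg) // lerXn2r // nnegrE (le_trans c0).
Qed.

Lemma opnorm_cmp_ext (I : {set 'I_n}) (z z' : 'I_n -> 'M[C]_m) :
  (forall i, i \in I -> z' i = z i) ->
  opnorm_cmp g (inH g I) (Trel z) (inH g setT) (Trel z').
Proof.
move=> zz' c c0 hc x _ hx ->.
have := inH_Tmap_diff zz' hx; rewrite setDv => /inH0/eqP; rewrite subr_eq0 => /eqP <-.
by apply: hc => //; exact: inH_subset (subsetT I) hx.
Qed.

Lemma interp_kernel_compression (I0 I1 : {set 'I_n}) (z : 'I_n -> 'M[C]_m) :
  interp_kernel m g ->
  opnorm_cmp g (inH2 g I0 I1) (Trel2 g I0 I1 z) (inH g I0) (Trel z).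
Proof.
move=> hi c c0 hc x y hx [[hy1 hy1orth] hy].
apply: ler_mul_sqr_eps; rewrite ?(ip_ge0 hg) // => e e0.
have [z' [zz' hz']] := (hi I0 z).2 c c0 hc e e0.
have hz'x : ip g (Tmap z' x) (Tmap z' x) <= (c + e) ^+ 2 * ip g x x.
  by apply: hz' => //; exact: inH_subset (subsetT I1) hx.1.
have orth : ip g (Tmap z' x - y) y = 0.
  have -> : Tmap z' x - y = (Tmap z x - y) + (Tmap z' x - Tmap z x).
    by rewrite [RHS]addrC addrA subrK.
  rewrite ipDl (hy y (conj hy1 hy1orth)) add0r (ip_herm hg) hy1orth ?conjC0 //.
  exact: inH_Tmap_diff hx.1.
apply: le_trans hz'x; rewrite -[Tmap z' x](subrK y) (ip_pyth hg) // lerDr.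
exact: ip_ge0.
Qed.

End Compression.

Definition rowproj (C : numClosedFieldType) n m (g : 'M[C]_n) (p : 'I_n)
    (y : 'M[C]_(n, m)) : 'M[C]_(n, m) :=
  \matrix_(i, k) if i == p then (\sum_(j < n) g j p * y j k) / g p p else 0.

Definition rowcompl (C : numClosedFieldType) n m (g : 'M[C]_n) (p : 'I_n)
    (y : 'M[C]_(n, m)) : 'M[C]_(n, m) := y - rowproj g p y.

Arguments rowproj : simpl never.
Arguments rowcompl : simpl never.

Lemma rowproj_is_linear (C : numClosedFieldType) n m (g : 'M[C]_n) p :
  linear (@rowproj C n m g p).
Proof.
move=> a x y; apply/matrixP => i k; rewrite !mxE; case: eqP => _; last by rewrite mulr0 addr0.
rewrite mulrA -mulrDl mulr_sumr -big_split /=; congr (_ / _).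
by apply: eq_bigr => j _; rewrite !mxE; ring.
Qed.

HB.instance Definition _ (C : numClosedFieldType) n m (g : 'M[C]_n) p :=
  GRing.isLinear.Build C 'M[C]_(n, m) 'M[C]_(n, m) _ (rowproj g p)
    (rowproj_is_linear g p).

Lemma rowcompl_is_linear (C : numClosedFieldType) n m (g : 'M[C]_n) p :
  linear (@rowcompl C n m g p).
Proof. by move=> a x y; rewrite /rowcompl linearP scalerBr opprD addrACA. Qed.

HB.instance Definition _ (C : numClosedFieldType) n m (g : 'M[C]_n) p :=
  GRing.isLinear.Build C 'M[C]_(n, m) 'M[C]_(n, m) _ (rowcompl g p)
    (rowcompl_is_linear g p).

Section RowProjection.
Variables (C : numClosedFieldType) (n m : nat) (g : 'M[C]_n) (p : 'I_n).
Hypotheses (hg : is_kernel g) (gpp : g p p != 0).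
Implicit Types (A B y : 'M[C]_(n, m)) (z : 'I_n -> 'M[C]_m).

Definition on_row y := forall i k, i != p -> y i k = 0.

Lemma rowproj_on_row y : on_row (rowproj g p y).
Proof. by move=> i k /negPf ip; rewrite mxE ip. Qed.

Lemma Tmap_on_row z y : on_row y -> on_row (Tmap z y).
Proof. by move=> hy i k ip; rewrite mxE big1 // => l _; rewrite hy // mulr0. Qed.

Lemma ip_on_row A B : on_row B ->
  ip g A B = \sum_(k < m) (\sum_(i < n) g i p * A i k) * (B p k)^*.
Proof.
move=> hB; have row_p i : \sum_(j < n) g i j * \sum_(k < m) A i k * (B j k)^* =
    g i p * \sum_(k < m) A i k * (B p k)^*.
  rewrite (bigD1 p) //= [X in _ + X]big1 ?addr0 // => j jp.
  by rewrite big1 ?mulr0 // => k _; rewrite hB // conjC0 mulr0.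
rewrite /ip; under eq_bigr => i _ do rewrite row_p mulr_sumr.
rewrite exchange_big /=; apply: eq_bigr => k _; rewrite mulr_suml.
by apply: eq_bigr => i _; rewrite mulrA.
Qed.

Lemma ip_rowproj A B : on_row B -> ip g (rowproj g p A) B = ip g A B.
Proof.
move=> hB; rewrite !(ip_on_row _ hB); apply: eq_bigr => k _; congr (_ * _).
rewrite (bigD1 p) //= big1 ?addr0 => [|i ip]; last by rewrite mxE (negPf ip) mulr0.
by rewrite mxE eqxx mulrC divfK.
Qed.

Lemma rowproj_id y : on_row y -> rowproj g p y = y.
Proof.
move=> hy; apply/matrixP => i k; rewrite mxE; case: eqP => [->|/eqP ip]; last by rewrite hy.
rewrite (bigD1 p) //= big1 ?addr0 => [|j jp]; last by rewrite hy // mulr0.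
by rewrite mulrAC divff // mul1r.
Qed.

Lemma rowcompl_eq0 y : on_row y -> rowcompl g p y = 0.
Proof. by move=> hy; rewrite /rowcompl rowproj_id // subrr. Qed.

Lemma ip_rowcompl A B : on_row B -> ip g (rowcompl g p A) B = 0.
Proof. by move=> hB; rewrite ipBl ip_rowproj // subrr. Qed.

Lemma ip_rowproj_split y : ip g y y =
  ip g (rowcompl g p y) (rowcompl g p y) + ip g (rowproj g p y) (rowproj g p y).
Proof.
rewrite -(ip_pyth hg); last by apply: ip_rowcompl; apply: rowproj_on_row.
by rewrite subrK.
Qed.

Lemma rowcompl_Tmap z y :
  rowcompl g p (Tmap z y) = rowcompl g p (Tmap z (rowcompl g p y)).
Proof.
rewrite [in RHS](linearB (Tmap z)) [in RHS]linearB.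
by rewrite [X in _ - X]rowcompl_eq0 ?subr0 //; apply/Tmap_on_row/rowproj_on_row.
Qed.

Lemma inH_rowproj (I : {set 'I_n}) y : p \in I -> inH g I (rowproj g p y).
Proof.
move=> pI i k; rewrite mxE; case: eqP => // ->.
by rewrite !inE pI gpp.
Qed.

Lemma on_row_inH (I : {set 'I_n}) B : I \subset [set p] -> inH g I B -> on_row B.
Proof.
move=> Ip hB i k ip; apply: hB; rewrite inE negb_and; apply/orP; left.
by apply: contra ip => /(subsetP Ip); rewrite inE.
Qed.

Definition rowpart y := \sum_(l < m) y p l *: delta_mx p l.

Lemma rowpartE y i k : rowpart y i k = if i == p then y p k else 0.
Proof.
rewrite summxE; under eq_bigr => l _ do rewrite !mxE.
have [_|_] := eqVneq i p; last by rewrite big1 // => l _; rewrite mulr0.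
rewrite (bigD1 k) //= eqxx mulr1 big1 ?addr0 // => l lk.
by rewrite eq_sym (negPf lk) mulr0.
Qed.

Lemma rowpart_on_row y : on_row (rowpart y).
Proof. by move=> i k ip; rewrite rowpartE (negPf ip). Qed.

Lemma inH_sub_rowpart (I : {set 'I_n}) y : inH g (p |: I) y -> inH g I (y - rowpart y).
Proof.
move=> hy i k iI; rewrite !mxE rowpartE; case: eqP => [->|/eqP ip]; first by rewrite subrr.
rewrite subr0; apply: hy; apply: contra iI.
by rewrite !inE (negPf ip) /= => /andP[-> ->].
Qed.

End RowProjection.

Section FormProjection.
Variables (C : numClosedFieldType) (n m : nat) (g : 'M[C]_n) (J : {set 'I_n}).
Variable G : 'M[C]_(n, m) -> 'M[C]_(n, m) -> C.
Hypotheses (G_scalar : forall b, scalar (G ^~ b)) (G_herm : forall a b, G b a = (G a b)^*).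
Hypothesis G_def : forall w, inH g J w -> G w w = 0 -> w = 0.

Lemma formBl a b d : G (a - b) d = G a d - G b d.
Proof. by rewrite -scaleN1r addrC (G_scalar d) mulN1r addrC. Qed.

Lemma formD_orth a w : G w a = 0 -> G (a + w) (a + w) = G a a + G w w.
Proof.
move=> wa0; have GDl b d e : G (b + d) e = G b e + G d e.
  by rewrite -[b]scale1r (G_scalar e) mul1r scale1r.
rewrite GDl [G a _]G_herm [G w _]G_herm !GDl wa0 [G a w]G_herm wa0.
by rewrite conjC0 addr0 add0r -!G_herm.
Qed.

Lemma form_orth_delta a :
  (forall i k, i \in J :&: spt g -> G a (delta_mx i k) = 0) ->
  forall h, inH g J h -> G a h = 0.
Proof.
move=> a0 h hJ; rewrite G_herm (matrix_sum_delta h) pair_big /= (scalar_sum (G_scalar a)).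
rewrite rmorph_sum big1 // => -[i k] _ /=.
have [iS|iS] := boolP (i \in J :&: spt g); last by rewrite hJ // mul0r conjC0.
by rewrite G_herm a0 // conjC0 mulr0 conjC0.
Qed.

(* The G-orthogonal projection onto H(J) is obtained by inverting the linear
   map [L], which is injective because G is definite on H(J). *)
Lemma form_proj_exists : exists P : 'End('M[C]_(n, m)), forall y,
  inH g J (P y) /\ forall h, inH g J h -> G (y - P y) h = 0.
Proof.
pose S := J :&: spt g.
pose L phi : 'M[C]_(n, m) :=
  \matrix_(i, k) if i \in S then G phi (delta_mx i k) else phi i k.
pose b y : 'M[C]_(n, m) := \matrix_(i, k) if i \in S then G y (delta_mx i k) else 0.
have linL : linear L.
  move=> a x y; apply/matrixP => i k; rewrite !mxE.
  by case: ifP => // _; exact: G_scalar.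
have linb : linear b.
  move=> a x y; apply/matrixP => i k; rewrite !mxE.
  by case: ifP => _; [exact: G_scalar | rewrite mulr0 addr0].
pose Ll : {linear 'M[C]_(n, m) -> 'M[C]_(n, m)} :=
  HB.pack L (GRing.isLinear.Build C _ _ _ L linL).
pose bl : {linear 'M[C]_(n, m) -> 'M[C]_(n, m)} :=
  HB.pack b (GRing.isLinear.Build C _ _ _ b linb).
have injL : injective L.
  move=> x y eL; apply/eqP; rewrite -subr_eq0; apply/eqP.
  have L0 : Ll (x - y) = 0 by rewrite linearB /= eL subrr.
  have entry i k : (if i \in S then G (x - y) (delta_mx i k) else (x - y) i k) = 0.
    by have := congr1 (fun M : 'M[C]_(n, m) => M i k) L0; rewrite !mxE.
  have hJ : inH g J (x - y) by move=> i k iS; have := entry i k; rewrite (negPf iS).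
  apply: G_def => //; apply: form_orth_delta hJ => i k iS.
  by have := entry i k; rewrite iS.
have [Linv LinvK] := linear_inj_rinverse linL injL.
pose P := (Linv \o linfun bl)%VF; exists P => y.
have entry i k : (if i \in S then G (P y) (delta_mx i k) else P y i k) =
    (if i \in S then G y (delta_mx i k) else 0).
  have := congr1 (fun M : 'M[C]_(n, m) => M i k) (LinvK (b y)).
  by rewrite !mxE /P comp_lfunE lfunE.
split; first by move=> i k iS; have := entry i k; rewrite (negPf iS).
apply: form_orth_delta => i k iS; have := entry i k; rewrite iS formBl => ->.
by rewrite subrr.
Qed.

End FormProjection.

Section OneStepExtension.
Variables (C : numClosedFieldType) (n m : nat) (g : 'M[C]_n) (p : 'I_n) (J : {set 'I_n}).
Variables (z : 'I_n -> 'M[C]_m) (c c' : C).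
Hypotheses (hg : is_kernel g) (gpp : g p p != 0) (pJ : p \notin J).
Hypotheses (c0 : 0 <= c) (cc' : c < c').
Hypothesis hJ : opnorm_le g (inH g J) (Trel z) c.
Hypothesis hcomp : opnorm_le g (inH2 g J (p |: J)) (Trel2 g J (p |: J) z) c.

Let c'_ge0 : 0 <= c' := le_trans c0 (ltW cc').
Let sqr_lt : c ^+ 2 < c' ^+ 2. Proof. by rewrite ltrXn2r. Qed.

Local Notation I1 := (p |: J).
Local Notation PL := (rowproj g p).
Local Notation Q := (rowcompl g p).
Implicit Types (a b x y w B : 'M[C]_(n, m)).

Lemma inH_step_on_row B : inH g (I1 :\: J) B -> on_row p B.
Proof.
apply: on_row_inH; apply/subsetP => i; rewrite !inE.
by case: eqP => //= _; rewrite andNb.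
Qed.

Lemma inH2_rowcompl y : inH g I1 y -> inH2 g J I1 (Q y).
Proof.
move=> hy; split; first by apply: inHB hy (inH_rowproj gpp _ (setU11 p J)).
by move=> B /inH_step_on_row; apply: ip_rowcompl.
Qed.

Lemma Trel2_rowcompl x : inH g I1 x -> Trel2 g J I1 z x (Q (Tmap z x)).
Proof.
move=> hx; split; first exact/inH2_rowcompl/inH_Tmap.
move=> B [_ hB]; rewrite /rowcompl subKr (ip_herm hg) hB ?conjC0 //.
by apply: (inH_rowproj gpp); rewrite !inE eqxx pJ.
Qed.

Lemma rowcompl_Tmap_bound x : inH g I1 x ->
  ip g (Q (Tmap z x)) (Q (Tmap z x)) <= c ^+ 2 * ip g x x.
Proof.
move=> hx; have hQx := inH2_rowcompl hx.
rewrite (rowcompl_Tmap gpp); apply: le_trans (hcomp hQx (Trel2_rowcompl hQx.1)) _.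
by rewrite ler_wpM2l ?exprn_ge0 // [leRHS](ip_rowproj_split hg gpp) lerDl ip_ge0.
Qed.

(* Every extension z' of z has [Q (Tmap z' x) = Q (Tmap z x)], so T_z' is
   bounded by c' on H(I1) iff the p-row [PL (Tmap z' x)] has squared norm at
   most [defect x x]. *)
Definition defect a b := c' ^+ 2 * ip g a b - ip g (Q (Tmap z a)) (Q (Tmap z b)).

Lemma defect_scalar b : scalar (defect ^~ b).
Proof. by move=> s x y; rewrite /defect !linearP !ipZDl; ring. Qed.

Lemma defect_herm a b : defect b a = (defect a b)^*.
Proof.
by rewrite /defect rmorphB rmorphM /= -!(ip_herm hg) geC0_conj ?exprn_ge0.
Qed.

Lemma defect_ge0 w : inH g I1 w -> 0 <= defect w w.
Proof.
move=> hw; rewrite subr_ge0 (le_trans (rowcompl_Tmap_bound hw)) //.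
by rewrite ler_wpM2r ?(ip_ge0 hg) ?ltW.
Qed.

Lemma defect_def w : inH g J w -> defect w w = 0 -> w = 0.
Proof.
move=> hw /eqP; rewrite subr_eq0 => /eqP dw.
have hw1 : inH g I1 w := inH_subset (subsetUr _ _) hw.
have : (c' ^+ 2 - c ^+ 2) * ip g w w <= 0.
  by rewrite mulrBl dw subr_le0 rowcompl_Tmap_bound.
rewrite pmulr_rle0 ?subr_gt0 // => wle0.
apply: (ip_eq0 hg (inH_subset (subsetT J) hw)).
by apply/le_anti; rewrite wle0 ip_ge0.
Qed.

Section ExtensionAlongProjection.
Variable P : 'End('M[C]_(n, m)).
Hypothesis hP : forall y,
  inH g J (P y) /\ forall h, inH g J h -> defect (y - P y) h = 0.

Definition zext i :=
  if i == p then \matrix_(l, k) (PL (Tmap z (P (delta_mx p l))) p k)^* else z i.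

Lemma zext_agree i : i \in J -> zext i = z i.
Proof. by rewrite /zext; case: eqP => // ->; rewrite (negPf pJ). Qed.

Lemma Tmap_zext x :
  Tmap zext x = Tmap z (x - rowpart p x) + PL (Tmap z (P (rowpart p x))).
Proof.
apply/matrixP => i k; rewrite mxE [RHS]mxE /zext.
have [->|ip] /= := eqVneq i p.
  rewrite [Tmap z _ _ _]mxE [X in _ = X + _]big1 ?add0r => [|l _]; last first.
    by rewrite !mxE rowpartE eqxx subrr mulr0.
  rewrite !linear_sum summxE; apply: eq_bigr => l _.
  by rewrite mxE conjCK !linearZ /= [RHS]mxE mulrC.
rewrite [Tmap z _ _ _]mxE [PL _ _ _]mxE (negPf ip) addr0; apply: eq_bigr => l _.
by rewrite !mxE rowpartE (negPf ip) subr0.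
Qed.

(* With [Phi := (x - rowpart x) + P (rowpart x)] in H(J), the p-row of
   T_zext x is that of T_z Phi, which is bounded by [defect Phi Phi] because
   ||T_z|| <= c on H(J); and [defect Phi Phi <= defect x x] because [x - Phi]
   is defect-orthogonal to H(J). *)
Lemma zext_bound : opnorm_le g (inH g I1) (Trel zext) c'.
Proof.
move=> x _ hx ->; set rx := rowpart p x; set h := x - rx.
pose Phi := h + P rx.
have hPhi : inH g J Phi := inHD (inH_sub_rowpart hx) (hP rx).1.
have PTPrx_row : on_row p (PL (Tmap z (P rx))) by apply: rowproj_on_row.
have QE : Q (Tmap zext x) = Q (Tmap z x).
  have Tx : Tmap z x = Tmap z h + Tmap z rx by rewrite -linearD /h subrK.
  rewrite Tmap_zext Tx !linearD /= (rowcompl_eq0 gpp PTPrx_row).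
  by rewrite (rowcompl_eq0 gpp (Tmap_on_row z (rowpart_on_row x))).
have PLE : PL (Tmap zext x) = PL (Tmap z Phi).
  by rewrite Tmap_zext !linearD /= (rowproj_id gpp PTPrx_row).
have b1 : ip g (PL (Tmap z Phi)) (PL (Tmap z Phi)) <= defect Phi Phi.
  have := hJ hPhi (erefl _); rewrite (ip_rowproj_split hg gpp) -lerBrDl => hb.
  by rewrite (le_trans hb) // lerB // ler_wpM2r ?(ip_ge0 hg) ?ltW.
have b2 : defect Phi Phi <= defect x x.
  have xE : x = Phi + (rx - P rx) by rewrite /Phi /h addrACA subrK subrr addr0.
  have hw : inH g I1 (rx - P rx).
    have -> : rx - P rx = x - Phi by rewrite {1}xE addrAC subrr add0r.
    exact: inHB hx (inH_subset (subsetUr _ _) hPhi).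
  rewrite [in X in _ <= X]xE (formD_orth defect_scalar defect_herm) ?lerDl ?defect_ge0 //.
  exact: (hP rx).2.
rewrite (ip_rowproj_split hg gpp) QE PLE.
by have := le_trans b1 b2; rewrite /defect lerBrDl addrC.
Qed.

End ExtensionAlongProjection.

Lemma one_point_extension : exists z' : 'I_n -> 'M[C]_m,
  (forall i, i \in J -> z' i = z i) /\ opnorm_le g (inH g I1) (Trel z') c'.
Proof.
have [P hP] := form_proj_exists defect_scalar defect_herm defect_def.
by exists (zext P); split; [exact: zext_agree | exact: zext_bound].
Qed.

End OneStepExtension.

Definition compression_norm_le (C : numClosedFieldType) n m (g : 'M[C]_n)
    (I0 I1 : {set 'I_n}) :=
  forall z : 'I_n -> 'M[C]_m,
    opnorm_cmp g (inH2 g I0 I1) (Trel2 g I0 I1 z) (inH g I0) (Trel z).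

Section Extension.
Variables (C : numClosedFieldType) (n m : nat) (g : 'M[C]_n).
Hypothesis hg : is_kernel g.
Hypothesis hstep : forall I0 I1 : {set 'I_n}, I0 \subset I1 ->
  (exists p, I1 :\: I0 = [set p]) -> compression_norm_le m g I0 I1.

Lemma extend_by_point (p : 'I_n) (J : {set 'I_n}) (z : 'I_n -> 'M[C]_m) (c c' : C) :
  p \notin J -> 0 <= c -> c < c' -> opnorm_le g (inH g J) (Trel z) c ->
  exists z' : 'I_n -> 'M[C]_m, (forall i, i \in J -> z' i = z i) /\
    opnorm_le g (inH g (p |: J)) (Trel z') c'.
Proof.
move=> pJ c0 cc' hJ; have [gpp|gpp0] := boolP (g p p != 0).
  have step : exists q, (p |: J) :\: J = [set q].
    exists p; apply/setP => i; rewrite !inE.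
    by case: eqVneq => [->|_] /=; rewrite ?pJ ?andNb.
  exact: one_point_extension hg gpp pJ c0 cc' hJ (hstep (subsetUr _ _) step c0 hJ).
exists z; split=> //; apply: (opnorm_le_mono hg c0 (ltW cc')) => x y hx; apply: hJ.
move=> i k iJ; apply: hx; apply: contra iJ; rewrite !inE.
by case: eqVneq => [->|_] /=; rewrite ?(negPf gpp0) ?andbF.
Qed.

Lemma extend_to_setT (J : {set 'I_n}) (z : 'I_n -> 'M[C]_m) (c c' : C) :
  0 <= c -> c < c' -> opnorm_le g (inH g J) (Trel z) c ->
  exists z' : 'I_n -> 'M[C]_m, (forall i, i \in J -> z' i = z i) /\
    opnorm_le g (inH g setT) (Trel z') c'.
Proof.
have [k] := ubnP #|~: J|; elim: k J z c c' => // k IHk J z c c' hk c0 cc' hJ.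
have [/eqP J_T|] := boolP (J == setT).
  by exists z; split=> //; rewrite -J_T; exact: (opnorm_le_mono hg c0 (ltW cc') hJ).
rewrite -subTset => /subsetPn[p _ pJ].
have [cm cm'] := midf_lt cc'.
have [z1 [zz1 hz1]] := extend_by_point pJ c0 cm hJ.
have hk1 : (#|~: (p |: J)| < k)%N.
  by move: hk; rewrite setCU setIC -setDE (cardsD1 p (~: J)) inE pJ add1n ltnS.
have [z2 [zz2 hz2]] := IHk _ z1 _ c' hk1 (le_trans c0 (ltW cm)) cm' hz1.
by exists z2; split=> // i iJ; rewrite zz2 ?zz1 // setU1r.
Qed.

Lemma compression_interp_kernel : interp_kernel m g.
Proof.
move=> I z; split=> [z' zz'|c c0 hc e e0]; first exact: opnorm_cmp_ext.
by apply: extend_to_setT hc; rewrite ?ltrDl.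
Qed.

End Extension.

Theorem proposition2p1 (C : numClosedFieldType) (n m : nat)
  (hn : (0 < n)%N) (hm : (0 < m)%N) (g : 'M[C]_n) (hg : is_kernel g) :
  (interp_kernel m g <->
   (forall (I0 I1 : {set 'I_n}), I0 \subset I1 ->
      forall z : 'I_n -> 'M[C]_m,
        opnorm_cmp g (inH2 g I0 I1) (Trel2 g I0 I1 z) (inH g I0) (Trel z)))
  /\
  (interp_kernel m g <->
   (forall (I0 I1 : {set 'I_n}), I0 \subset I1 ->
      (exists p : 'I_n, I1 :\: I0 = [set p]) ->
      forall z : 'I_n -> 'M[C]_m,
        opnorm_cmp g (inH2 g I0 I1) (Trel2 g I0 I1 z) (inH g I0) (Trel z))).
Proof.
have i_ii I0 I1 : interp_kernel m g -> compression_norm_le m g I0 I1.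
  by move=> hi z; apply: interp_kernel_compression.
have iii_i := compression_interp_kernel hg.
split; split.
- by move=> hi I0 I1 _; apply: i_ii.
- by move=> hii; apply: iii_i => I0 I1 sub _; apply: hii.
- by move=> hi I0 I1 _ _; apply: i_ii.
- exact: iii_i.
Qed.
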